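(* Let $\mathcal{M}_1,\dots,\mathcal{M}_k$ be register automata over the alphabet $\Sigma=\{<,=,>\}$, each having the incremental-automaton property, and let $\mathcal{I}=\mathcal{M}_1\cap\dots\cap\mathcal{M}_k$ be their intersection. Let $e,e_0,e_1,\dots,e_k\in\mathbb{Z}$ and let $X=\langle X_1,\dots,X_n\rangle$ be an accepting sequence with respect to $\mathcal{I}$, where $(R_1,\dots,R_k)$ is the vector of values returned by $\mathcal{I}$ after consuming the signature of $X$, and set $v=e+e_0\cdot n+\sum_{i=1}^k e_i\cdot R_i$. Then the weight of $X$ in the invariant digraph $D(\mathcal{I},v)$ is less than or equal to $e+e_0\cdot n+\sum_{i=1}^k e_i\cdot R_i$.
   Context: Signature: for an integer sequence $X=\langle X_1,\dots,X_n\rangle$, its signature is the word $S=\langle S_1,\dots,S_{n-1}\rangle$ over $\Sigma=\{<,=,>\}$ with $S_i$ equal to $<$, $=$ or $>$ according as $X_i<X_{i+1}$, $X_i=X_{i+1}$, $X_i>X_{i+1}$ (the signature has arity $p=2$). Register automaton: a tuple $(Q,\Sigma,\delta,q_0,I,A,\alpha)$ with finite state set $Q$, input alphabet $\Sigma$, a (deterministic, possibly partial) transition function $\delta:(Q\times\mathbb{Z}^r)\times\Sigma\to Q\times\mathbb{Z}^r$ ($r\ge1$ registers), initial state $q_0$, initial register values $I\in\mathbb{Z}^r$, accepting states $A\subseteq Q$, and acceptance function $\alpha:\mathbb{Z}^r\to\mathbb{Z}$. Consuming a word from $(q_0,I)$ triggers a sequence of transitions; if it ends in an accepting state with register values $d$,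 the automaton returns $\alpha(d)$, otherwise it fails. A sequence $X$ is accepting w.r.t. an automaton if the automaton does not fail on the signature of $X$. Incremental-automaton property of an automaton with registers $A_1,\dots,A_r$: (1) every initial value $I_j$ is in $\mathbb{N}$; (2) on every transition $t$, each register is updated as $A_j\leftarrow \alpha^t_{j,0}+\sum_{i=1}^r\alpha^t_{j,i}A_i$ with $\alpha^t_{j,0}\in\mathbb{N}$ and $\alpha^t_{j,i}\in\{0,1\}$; (3) the register $A_r$ (main register) satisfies: (a) the returned value is the final value of $A_r$, (b) $\alpha^t_{r,r}=1$ for every transition $t$, (c) there is a non-empty set $T$ of transitions with $\sum_{i=1}^{r-1}\alpha^t_{r,i}>0$ for all $t\in T$; (4) for every other register $A_j$, $j<r$ (potential registers), on every transition $t$ we have $\sum_{i\ne j}\alpha^t_{j,i}=0$, and if $\alpha^t_{r,j}>0$ then $\alpha^t_{j,j}=0$. Intersection $\mathcal{I}=\mathcal{M}_1\cap\dots\cap\mathcal{M}_k$: the product automaton reading each letter simultaneously in all $\mathcal{M}_i$; its states are tuples of states, its registers are the disjoint union of the registers of the $\mathcal{M}_i$ (not merged), each updated as in its own $\mathcal{M}_i$; a state is accepting iff all components are; it returns $(R_1,\dots,R_k)$ where $R_i$ is the value returned by $\mathcal{M}_i$. For a transition $t$ of $\mathcal{I}$, $\alpha^t_{i,j,0}$ denotes the constant term in the update of the register of $\mathcal{I}$ corresponding to register $j$ of $\mathcal{M}_i$, and $I_{i,j}$ its initial value; $r_i$ is the number of registers of $\mathcal{M}_i$ (register $r_i$ being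 its main register). Invariant digraph $D(\mathcal{I},v)$ for $v=e+e_0n+\sum_i e_iR_i$: nodes are the states of $\mathcal{I}$; each transition $t$ of $\mathcal{I}$ gives an arc with weight $e_0+\sum_{i=1}^k e_i\beta_i^t$, where $\beta_i^t=\alpha^t_{i,r_i,0}$ if $e_i\ge0$ and $\beta_i^t=\sum_{j=1}^{r_i}\alpha^t_{i,j,0}$ if $e_i<0$. Walk and weight of an accepting sequence $X$: the walk of $X$ is the path in $D(\mathcal{I},v)$ formed by the arcs of the transitions triggered when consuming the signature of $X$. The weight of $X$ is the weight of this walk plus the initialisation weight $e+e_0\cdot(p-1)+\sum_{i=1}^k e_i\beta_i^0$ with $p=2$, where $\beta_i^0=I_{i,r_i}$ if $e_i\ge0$ and $\beta_i^0=\sum_{j=1}^{r_i}I_{i,j}$ if $e_i<0$. *)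

From mathcomp Require Import all_boot all_order all_algebra.
Set Implicit Arguments. Unset Strict Implicit. Unset Printing Implicit Defensive.
Import Order.TTheory GRing.Theory Num.Theory.
Local Open Scope ring_scope.

Inductive sigletter := SLt | SEq | SGt.

Definition sig_of (a b : int) : sigletter :=
  if a < b then SLt else if a == b then SEq else SGt.

Definition signature (X : seq int) : seq sigletter :=
  [seq sig_of x.1 x.2 | x <- zip X (behead X)].

Definition sig_arity : nat := 2.

(** A deterministic (partial) register automaton whose transitions are the
    arcs q --s--> q' (given by [ra_delta]) and whose register updates are
    given by coefficients: on transition (q,s),
      A_j <- ra_cst q s j + \sum_i ra_coef q s j i * A_i.
    Registers are indexed by 'I_(ra_nreg.+1) (so r = ra_nreg + 1 >= 1);
    the register r (main register) is [ord_max]. *)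
Record regaut := RegAut {
  ra_state : finType;
  ra_nreg : nat;
  ra_delta : ra_state -> sigletter -> option ra_state;
  ra_cst : ra_state -> sigletter -> 'I_ra_nreg.+1 -> int;
  ra_coef : ra_state -> sigletter -> 'I_ra_nreg.+1 -> 'I_ra_nreg.+1 -> int;
  ra_q0 : ra_state;
  ra_init : 'I_ra_nreg.+1 -> int;
  ra_acc : pred ra_state;
  ra_alpha : ('I_ra_nreg.+1 -> int) -> int }.

Definition regs (M : regaut) := 'I_(ra_nreg M).+1 -> int.
Arguments ra_cst : clear implicits.
Arguments ra_coef : clear implicits.
Arguments ra_delta : clear implicits.
Arguments ra_init : clear implicits.
Arguments ra_acc : clear implicits.
Arguments ra_alpha : clear implicits.
Arguments ra_q0 : clear implicits.

Definition upd (M : regaut) (q : ra_state M) (s : sigletter) (d : regs M) : regs M :=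
  fun j => ra_cst M q s j + \sum_(i < (ra_nreg M).+1) ra_coef M q s j i * d i.
Arguments upd : clear implicits.

Definition incremental (M : regaut) : Prop :=
  (forall j, 0 <= ra_init M j) /\
  (forall q s, ra_delta M q s <> None -> forall j,
      0 <= ra_cst M q s j /\ (forall i, ra_coef M q s j i \in [:: 0; 1])) /\
  (forall d, ra_alpha M d = d ord_max) /\
  (forall q s, ra_delta M q s <> None -> ra_coef M q s ord_max ord_max = 1) /\
  (exists q s, ra_delta M q s <> None /\
      0 < \sum_(i < (ra_nreg M).+1 | i != ord_max) ra_coef M q s ord_max i) /\
  (forall q s, ra_delta M q s <> None -> forall j : 'I_(ra_nreg M).+1, j != ord_max ->
      \sum_(i < (ra_nreg M).+1 | i != j) ra_coef M q s j i = 0 /\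
      (0 < ra_coef M q s ord_max j -> ra_coef M q s j j = 0)).

Section Inter.
Variables (k : nat) (M : 'I_k -> regaut).

Definition pstate := forall i : 'I_k, ra_state (M i).
Definition pregs := forall i : 'I_k, regs (M i).

Definition pq0 : pstate := fun i => ra_q0 (M i).
Definition pinit : pregs := fun i => ra_init (M i).

Definition pdelta (p : pstate) (s : sigletter) : option pstate :=
  if [forall i, ra_delta (M i) (p i) s != None] then
    Some (fun i => odflt (p i) (ra_delta (M i) (p i) s))
  else None.

Definition pupd (p : pstate) (s : sigletter) (d : pregs) : pregs :=
  fun i => upd (M i) (p i) s (d i).

Fixpoint prun (p : pstate) (d : pregs) (w : seq sigletter) : option (pstate * pregs) :=
  match w with
  | [::] => Some (p, d)
  | s :: w' => match pdelta p s with
               | Some p' => prun p' (pupd p s d) w'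
               | None => None
               end
  end.

(** Consuming the signature of X from (q0, I): [Some R] (the vector of values
    (R_1..R_k) returned by I) if X is accepting, [None] if I fails. *)
Definition inter_result (X : seq int) : option ('I_k -> int) :=
  match prun pq0 pinit (signature X) with
  | Some (p, d) => if [forall i, ra_acc (M i) (p i)]
                   then Some (fun i => ra_alpha (M i) (d i)) else None
  | None => None
  end.

Fixpoint pwalk (p : pstate) (w : seq sigletter) : seq (pstate * sigletter) :=
  match w with
  | [::] => [::]
  | s :: w' => match pdelta p s with
               | Some p' => (p, s) :: pwalk p' w'
               | None => [::]
               end
  end.

(** Invariant digraph D(I, v), v = e + e0 n + sum_i es_i R_i:
    weight of the arc of transition t = (p, s). *)
Definition beta (i : 'I_k) (ei : int) (q : ra_state (M i)) (s : sigletter) : int :=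
  if 0 <= ei then ra_cst (M i) q s ord_max
  else \sum_(j < (ra_nreg (M i)).+1) ra_cst (M i) q s j.

Definition arc_weight (e0 : int) (es : 'I_k -> int) (t : pstate * sigletter) : int :=
  e0 + \sum_(i < k) es i * beta (es i) (t.1 i) t.2.

Definition beta0 (i : 'I_k) (ei : int) : int :=
  if 0 <= ei then ra_init (M i) ord_max
  else \sum_(j < (ra_nreg (M i)).+1) ra_init (M i) j.

Definition seq_weight (e e0 : int) (es : 'I_k -> int) (X : seq int) : int :=
  e + e0 * (sig_arity.-1)%:Z + \sum_(i < k) es i * beta0 i (es i)
  + \sum_(t <- pwalk pq0 (signature X)) arc_weight e0 es t.

End Inter.

(** Fix a component [M_i] and read its register vector [d] through the
    potential [d_r] (if [e_i >= 0]) or [d_1 + ... + d_r] (if [e_i < 0]).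
    All registers stay nonnegative, so on a transition the main register
    grows by at least its constant term, since it keeps its own value with
    coefficient 1; and the total grows by at most the sum of the constant
    terms, since every register is copied into at most one register
    (coefficient columns sum to at most 1).  Hence each arc increases
    [e_i * potential] by at least [e_i * beta_i^t], and telescoping along the
    walk from the initial registers bounds the [i]-th part of the weight,
    [e_i * beta_i^0 + sum_t e_i * beta_i^t], by [e_i * R_i], because
    [R_i = d_r <= d_1 + ... + d_r].  The [n - 1] arcs and the initialisation
    together contribute [e0 * n]. *)

From mathcomp Require Import all_boot all_order all_algebra.
From mathcomp Require Import ring.
Import Order.TTheory GRing.Theory Num.Theory.
Set Implicit Arguments.
Unset Strict Implicit.
Local Open Scope ring_scope.

(* [beta] and [beta0] are, by conversion, this potential evaluated at the
   constant terms of a transition and at the initial register values. *)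
Definition reg_potential (N : regaut) (c : int) (d : regs N) : int :=
  if 0 <= c then d ord_max else \sum_j d j.

Section Incremental.
Variable N : regaut.
Hypothesis N_incr : incremental N.
Variables (q : ra_state N) (s : sigletter).
Hypothesis q_s_defined : ra_delta N q s <> None.

Lemma incremental_coef01 j i : ra_coef N q s j i = 0 \/ ra_coef N q s j i = 1.
Proof.
case: N_incr => _ [coefP _]; have [_ /(_ i)] := coefP q s q_s_defined j.
by rewrite !inE => /orP[]/eqP->; [left | right].
Qed.

Lemma incremental_coef_ge0 j i : 0 <= ra_coef N q s j i.
Proof. by case: (incremental_coef01 j i) => ->. Qed.

Lemma upd_ge0 (d : regs N) :
  (forall j, 0 <= d j) -> forall j, 0 <= upd N q s d j.
Proof.
move=> d_ge0 j; case: N_incr => _ [coefP _].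
have [cst_ge0 _] := coefP q s q_s_defined j.
apply: addr_ge0 => //; apply: sumr_ge0 => i _.
by rewrite mulr_ge0 ?incremental_coef_ge0.
Qed.

Lemma upd_main_ge (d : regs N) : (forall j, 0 <= d j) ->
  d ord_max + ra_cst N q s ord_max <= upd N q s d ord_max.
Proof.
move=> d_ge0; case: N_incr => _ [_ [_ [main_self _]]].
rewrite /upd (bigD1 ord_max) //= main_self // mul1r addrCA lerD2l lerDl.
by apply: sumr_ge0 => i _; rewrite mulr_ge0 ?incremental_coef_ge0.
Qed.

(* A potential register other than [i] never reads [i], and if the main
   register reads [i] then [i] is reset. *)
Lemma sum_coef_col_le1 i : \sum_j ra_coef N q s j i <= 1.
Proof.
case: N_incr => _ [_ [_ [main_self [_ potP]]]].
have off_diag0 j : j != ord_max -> i != j -> ra_coef N q s j i = 0.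
  move=> j_pot ij; have [/psumr_eq0P row0 _] := potP q s q_s_defined j j_pot.
  by apply: row0 => // l _; apply: incremental_coef_ge0.
rewrite (bigD1 ord_max) //=.
have [i_max | i_pot] := eqVneq i ord_max.
  subst i; rewrite main_self // big1 ?addr0 // => j j_pot.
  by apply: off_diag0 => //; rewrite eq_sym.
rewrite (bigD1 i) //= big1 ?addr0; last first.
  by move=> j /andP[j_pot ji]; apply: off_diag0; rewrite // eq_sym.
have [_ main_reads0] := potP q s q_s_defined i i_pot.
case: (incremental_coef01 ord_max i) => main_i; rewrite main_i.
  by rewrite add0r; case: (incremental_coef01 i i) => ->.
by rewrite main_reads0 ?main_i ?addr0.
Qed.

Lemma sum_upd_le (d : regs N) : (forall j, 0 <= d j) ->
  \sum_j upd N q s d j <= \sum_j d j + \sum_j ra_cst N q s j.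
Proof.
move=> d_ge0; rewrite /upd big_split /= addrC lerD2r exchange_big /=.
apply: ler_sum => i _; rewrite -mulr_suml.
by rewrite -[leRHS]mul1r ler_wpM2r ?sum_coef_col_le1.
Qed.

Lemma mul_potential_upd (c : int) (d : regs N) : (forall j, 0 <= d j) ->
  c * reg_potential c d + c * reg_potential c (ra_cst N q s)
    <= c * reg_potential c (upd N q s d).
Proof.
move=> d_ge0; rewrite -mulrDr /reg_potential; case: ifP => c_ge0.
  by rewrite ler_wpM2l ?upd_main_ge.
by rewrite ler_nM2l ?sum_upd_le // ltNge c_ge0.
Qed.

End Incremental.

Lemma mul_potential_le_main (N : regaut) (c : int) (d : regs N) :
  (forall j, 0 <= d j) -> c * reg_potential c d <= c * d ord_max.
Proof.
move=> d_ge0; rewrite /reg_potential; case: ifP => // /negbT c_lt0.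
rewrite ler_nM2l; last by rewrite ltNge.
by rewrite (bigD1 ord_max) //= lerDl sumr_ge0.
Qed.

Section Intersection.
Variables (k : nat) (M : 'I_k -> regaut).

Definition pregs_ge0 (d : pregs M) := forall i j, 0 <= d i j.

Lemma pdelta_component p s p' i :
  pdelta p s = Some p' -> ra_delta (M i) (p i) s <> None.
Proof. by rewrite /pdelta; case: ifP => // /forallP defined _; apply/eqP. Qed.

Lemma size_pwalk w p (d : pregs M) r :
  prun p d w = Some r -> size (pwalk p w) = size w.
Proof.
elim: w p d => [|s w IH] p d //=.
by case: pdelta => // p' /IH /= ->.
Qed.

Hypothesis M_incr : forall i, incremental (M i).

Lemma pupd_ge0 p s p' (d : pregs M) : pdelta p s = Some p' ->
  pregs_ge0 d -> pregs_ge0 (pupd p s d).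
Proof.
move=> step d_ge0 i.
exact: (upd_ge0 (M_incr i) (pdelta_component step) (d_ge0 i)).
Qed.

Lemma prun_ge0 w p (d : pregs M) p' d' : prun p d w = Some (p', d') ->
  pregs_ge0 d -> pregs_ge0 d'.
Proof.
elim: w p d => [|s w IH] p d /=; first by case=> _ <-.
case step: pdelta => [p1|] // run d_ge0.
exact: IH run (pupd_ge0 step d_ge0).
Qed.

Lemma prun_mul_potential w p (d : pregs M) p' d' (c : 'I_k -> int) :
  prun p d w = Some (p', d') -> pregs_ge0 d -> forall i,
  c i * reg_potential (c i) (d i)
    + \sum_(t <- pwalk p w) c i * beta (c i) (t.1 i) t.2
    <= c i * reg_potential (c i) (d' i).
Proof.
elim: w p d => [|s w IH] p d /=.
  by case=> _ <- _ i; rewrite big_nil addr0.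
case step: pdelta => [p1|] // run d_ge0 i.
rewrite big_cons /= addrA; apply: le_trans (IH _ _ run (pupd_ge0 step d_ge0) i).
rewrite lerD2r.
exact: (mul_potential_upd (M_incr i) (pdelta_component step) (c i) (d_ge0 i)).
Qed.

End Intersection.

Lemma size_signature X : size (signature X) = (size X).-1.
Proof.
rewrite /signature size_map size_zip size_behead.
by case: (size X) => //= n; rewrite minnE subKn.
Qed.

Lemma seq_weightE (k : nat) (M : 'I_k -> regaut) e e0 es X :
  (0 < size X)%N -> size (pwalk (pq0 M) (signature X)) = (size X).-1 ->
  seq_weight M e e0 es X = e + e0 * (size X)%:Z
    + \sum_(i < k) (es i * beta0 M i (es i)
        + \sum_(t <- pwalk (pq0 M) (signature X))
            es i * beta (es i) (t.1 i) t.2).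
Proof.
move=> X_gt0 walk_size; rewrite /seq_weight /arc_weight big_split /=.
rewrite big_const_seq count_predT iter_addr addr0 -mulr_natr natz walk_size.
rewrite (exchange_big_dep xpredT) //= big_split /=.
have -> : (size X)%:Z = 1 + ((size X).-1)%:Z by rewrite -PoszD add1n prednK.
rewrite /sig_arity /= mulrDr mulr1; ring.
Qed.

Theorem theorem1 (k : nat) (M : 'I_k -> regaut)
  (Hinc : forall i, incremental (M i))
  (e e0 : int) (es : 'I_k -> int) (X : seq int) (R : 'I_k -> int) :
  (0 < size X)%N ->
  inter_result M X = Some R ->
  seq_weight M e e0 es X <= e + e0 * (size X)%:Z + \sum_(i < k) es i * R i.
Proof.
move=> X_gt0; rewrite /inter_result; case run: prun => [[p d]|] //.
case: ifP => // _ [<-].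
have init_ge0 : pregs_ge0 (@pinit _ M) by move=> i; case: (Hinc i).
have d_ge0 := prun_ge0 Hinc run init_ge0.
rewrite seq_weightE // ?(size_pwalk run) ?size_signature // lerD2l.
apply: ler_sum => i _; case: (Hinc i) => _ [_ [-> _]].
apply: le_trans (prun_mul_potential Hinc es run init_ge0 i) _.
exact: mul_potential_le_main.
Qed.
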